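(* Let $(A,B)$ be a $3\times 3$ bimatrix game which is zero-sum, satisfies $a_{ij}\neq a_{i'j}$ and $b_{ij}\ne b_{ij'}$ for all $i\ne i'$, $j\ne j'$, and has a unique Nash equilibrium, which lies in the interior of $\Sigma_A\times\Sigma_B$. Then: (1) the transition diagram of $(A,B)$ has no alternating cycles; (2) the transition diagram has no sinks; (3) the transition diagram has no sources.
   Context: $\Sigma_A$, $\Sigma_B$ are the simplices of probability row, resp. column, vectors in $\mathbb{R}^3$; $\mathrm{BR}_A(q)=\operatorname{argmax}_{p\in\Sigma_A}pAq$, $\mathrm{BR}_B(p)=\operatorname{argmax}_{q\in\Sigma_B}pBq$; a Nash equilibrium is $(\bar p,\bar q)$ with $\bar p\in\mathrm{BR}_A(\bar q)$, $\bar q\in\mathrm{BR}_B(\bar p)$. The game is zero-sum if there are $e,g>0$, $f_j,h_i\in\mathbb{R}$ such that $C=(e a_{ij}+f_j)$ and $D=(g b_{ij}+h_i)$ satisfy $C+D=0$. The transition diagram: for $i\ne i'$, $(i,j)\to(i',j)$ iff $a_{i'j}>a_{ij}$; for $j\ne j'$, $(i,j)\to(i,j')$ iff $b_{ij'}>b_{ij}$. A cell $(i,j)$ is a sink if $(i',j)\to(i,j)$ and $(i,j')\to(i,j)$ for all $i'\ne i,j'\ne j$, and a source if all these arrows point out of $(i,j)$. An alternating cycle is a sequence of cells $(i_0,j_0),\dots,(i_n,j_n)=(i_0,j_0)$, consecutive ones differing in exactly one coordinate, such that either $(i_k,j_k)\to(i_{k+1},j_{k+1})$ whenever $i_k\ne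 i_{k+1}$ and $(i_{k+1},j_{k+1})\to(i_k,j_k)$ whenever $j_k\ne j_{k+1}$, or the same with both directions reversed. *)

From HB Require Import structures.
From mathcomp Require Import all_boot all_order all_algebra.
From mathcomp Require Import reals.
Set Implicit Arguments. Unset Strict Implicit. Unset Printing Implicit Defensive.
Import Order.TTheory GRing.Theory Num.Theory.
Local Open Scope ring_scope.

Section Bimatrix.
Variable R : realType.

Definition in_SigmaA (p : 'rV[R]_3) : Prop :=
  (forall j, 0 <= p 0 j) /\ \sum_(j < 3) p 0 j = 1.
Definition in_SigmaB (q : 'cV[R]_3) : Prop :=
  (forall i, 0 <= q i 0) /\ \sum_(i < 3) q i 0 = 1.

Definition payoff (p : 'rV[R]_3) (M : 'M[R]_3) (q : 'cV[R]_3) : R :=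
  (p *m M *m q) 0 0.

Definition in_BR_A (A : 'M[R]_3) (q : 'cV[R]_3) (p : 'rV[R]_3) : Prop :=
  in_SigmaA p /\ forall p', in_SigmaA p' -> payoff p' A q <= payoff p A q.
Definition in_BR_B (B : 'M[R]_3) (p : 'rV[R]_3) (q : 'cV[R]_3) : Prop :=
  in_SigmaB q /\ forall q', in_SigmaB q' -> payoff p B q' <= payoff p B q.

Definition nash_eq (A B : 'M[R]_3) (p : 'rV[R]_3) (q : 'cV[R]_3) : Prop :=
  in_BR_A A q p /\ in_BR_B B p q.

(* zero-sum up to positive affine rescaling of each player's payoffs *)
Definition zero_sum (A B : 'M[R]_3) : Prop :=
  exists (e g : R) (f h : 'I_3 -> R), 0 < e /\ 0 < g /\
    forall i j, (e * A i j + f j) + (g * B i j + h i) = 0.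

Definition cell := ('I_3 * 'I_3)%type.

Definition arrow (A B : 'M[R]_3) (c d : cell) : Prop :=
  (c.2 = d.2 /\ c.1 != d.1 /\ A c.1 c.2 < A d.1 c.2) \/
  (c.1 = d.1 /\ c.2 != d.2 /\ B c.1 c.2 < B c.1 d.2).

Definition is_sink (A B : 'M[R]_3) (c : cell) : Prop :=
  (forall i', i' != c.1 -> arrow A B (i', c.2) c) /\
  (forall j', j' != c.2 -> arrow A B (c.1, j') c).

Definition is_source (A B : 'M[R]_3) (c : cell) : Prop :=
  (forall i', i' != c.1 -> arrow A B c (i', c.2)) /\
  (forall j', j' != c.2 -> arrow A B c (c.1, j')).

Definition alternating_cycle (A B : 'M[R]_3) (n : nat) (c : nat -> cell) : Prop :=
  (0 < n)%N /\ c n = c 0%N /\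
  (forall k, (k < n)%N ->
     ((c k).1 != (c k.+1).1) (+) ((c k).2 != (c k.+1).2)) /\
  ((forall k, (k < n)%N ->
      ((c k).1 != (c k.+1).1 -> arrow A B (c k) (c k.+1)) /\
      ((c k).2 != (c k.+1).2 -> arrow A B (c k.+1) (c k))) \/
   (forall k, (k < n)%N ->
      ((c k).1 != (c k.+1).1 -> arrow A B (c k.+1) (c k)) /\
      ((c k).2 != (c k.+1).2 -> arrow A B (c k) (c k.+1)))).

End Bimatrix.

From mathcomp Require Import all_boot all_order all_algebra.
From mathcomp Require Import reals.
From mathcomp Require Import ring.
Set Implicit Arguments.
Unset Strict Implicit.
Unset Printing Implicit Defensive.
Import Order.TTheory GRing.Theory Num.Theory.
Local Open Scope ring_scope.

(* A sink (i, j) is a pure Nash equilibrium, so by uniqueness the interior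
   equilibrium would be pure.  For the rest, zero-sum-ness gives a potential
   phi = e A + f = -(g B + h) that is strictly monotone along every step of
   an alternating cycle, which is absurd.  At an interior equilibrium every row
   of phi has the same q-average and every column the same p-average, and the
   two common values agree; at a source (i, j), phi i j is the strict maximum
   of its row and the strict minimum of its column, so the row-i average is
   below phi i j and the column-j average above it. *)

Section ConvexCombination.
Variables (R : numDomainType) (I : finType) (w : I -> R).
Hypotheses (w_ge0 : forall k, 0 <= w k) (w_sum1 : \sum_k w k = 1).

Lemma convex_comb_const c : \sum_k w k * c = c.
Proof. by rewrite -big_distrl /= w_sum1 mul1r. Qed.

Lemma convex_comb_le x v : (forall k, x k <= v) -> \sum_k w k * x k <= v.
Proof.
move=> x_le; rewrite -[leRHS]convex_comb_const.
by apply: ler_sum => k _; apply: ler_wpM2l.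
Qed.

Lemma convex_comb_lt x v k0 : (forall k, x k <= v) -> 0 < w k0 -> x k0 < v ->
  \sum_k w k * x k < v.
Proof.
move=> x_le w0_gt0 x0_lt; rewrite -subr_gt0.
have -> : v - \sum_k w k * x k = \sum_k w k * (v - x k).
  by rewrite -[v in LHS]convex_comb_const -sumrB; apply: eq_bigr => k _; rewrite mulrBr.
rewrite (bigD1 k0) //=; apply: ltr_pwDl; first by rewrite mulr_gt0 ?subr_gt0.
by apply: sumr_ge0 => k _; rewrite mulr_ge0 ?subr_ge0.
Qed.

Lemma convex_comb_eq_ub x v : (forall k, 0 < w k) -> (forall k, x k <= v) ->
  \sum_k w k * x k = v -> forall k, x k = v.
Proof.
move=> w_gt0 x_le avg_v k; apply/eqP/negPn/negP => xk_neq.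
have /(@convex_comb_lt x v k x_le (w_gt0 k)) : x k < v by rewrite lt_neqAle xk_neq x_le.
by rewrite avg_v ltxx.
Qed.

End ConvexCombination.

Lemma no_increasing_cycle (R : numDomainType) (u : nat -> R) n :
  (0 < n)%N -> u n = u 0%N -> ~ (forall k, (k < n)%N -> u k < u k.+1).
Proof.
move=> n_gt0 un_u0 u_incr.
have : u 0%N < u n.
  apply: (@homo_ltn_in _ [pred k | k <= n]%N _ _ (@lt_trans _ _)); rewrite ?inE //.
  - by move=> i j _ j_le k /andP[_ /ltnW /leq_trans]; apply.
  - by move=> k _ k_lt; apply: u_incr.
by rewrite un_u0 ltxx.
Qed.

Section PurePayoffs.
Variable R : realType.
Implicit Types (M : 'M[R]_3) (p : 'rV[R]_3) (q : 'cV[R]_3).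

Lemma payoff_rowE p M q : payoff p M q = \sum_k p 0 k * (M *m q) k 0.
Proof. by rewrite /payoff -mulmxA mxE. Qed.

Lemma payoff_colE p M q : payoff p M q = \sum_l q l 0 * (p *m M) 0 l.
Proof. by rewrite /payoff mxE; apply: eq_bigr => l _; rewrite mulrC. Qed.

Lemma payoff_delta_row i M q : payoff 'e_i M q = (M *m q) i 0.
Proof. by rewrite /payoff -mulmxA -rowE mxE. Qed.

Lemma payoff_delta_col p M j : payoff p M (delta_mx j 0) = (p *m M) 0 j.
Proof. by rewrite /payoff -colE mxE. Qed.

Lemma payoff_delta i M j : payoff 'e_i M (delta_mx j 0) = M i j.
Proof. by rewrite payoff_delta_row -colE mxE. Qed.

Lemma delta_row_in_SigmaA i : in_SigmaA ('e_i : 'rV[R]_3).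
Proof.
split=> [j|]; first by rewrite mxE ler0n.
rewrite (bigD1 i) //= mxE !eqxx big1 ?addr0 // => j /negbTE j_neq.
by rewrite mxE j_neq andbF.
Qed.

Lemma delta_col_in_SigmaB j : in_SigmaB (delta_mx j 0 : 'cV[R]_3).
Proof.
split=> [i|]; first by rewrite mxE ler0n.
rewrite (bigD1 j) //= mxE !eqxx big1 ?addr0 // => i /negbTE i_neq.
by rewrite mxE i_neq.
Qed.

Lemma in_BR_A_indifferent M q p : in_BR_A M q p -> (forall k, 0 < p 0 k) ->
  forall k, (M *m q) k 0 = payoff p M q.
Proof.
move=> [[p_ge0 p_sum1] p_best] p_gt0.
apply: (convex_comb_eq_ub p_ge0 p_sum1 p_gt0); last by rewrite payoff_rowE.
by move=> k; rewrite -payoff_delta_row; apply/p_best/delta_row_in_SigmaA.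
Qed.

Lemma in_BR_B_indifferent M p q : in_BR_B M p q -> (forall l, 0 < q l 0) ->
  forall l, (p *m M) 0 l = payoff p M q.
Proof.
move=> [[q_ge0 q_sum1] q_best] q_gt0.
apply: (convex_comb_eq_ub q_ge0 q_sum1 q_gt0); last by rewrite payoff_colE.
by move=> l; rewrite -payoff_delta_col; apply/q_best/delta_col_in_SigmaB.
Qed.

Lemma const_row_col_values_eq M p q a b : in_SigmaA p -> in_SigmaB q ->
  (forall k, (M *m q) k 0 = a) -> (forall l, (p *m M) 0 l = b) -> a = b.
Proof.
move=> [_ p_sum1] [_ q_sum1] rowsE colsE.
transitivity (payoff p M q).
  by rewrite payoff_rowE; under eq_bigr do rewrite rowsE; rewrite convex_comb_const.
by rewrite payoff_colE; under eq_bigr do rewrite colsE; rewrite convex_comb_const.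
Qed.

End PurePayoffs.

Section TransitionDiagram.
Variables (R : realType) (A B : 'M[R]_3).

Lemma arrow_col_lt i i' j : arrow A B (i, j) (i', j) -> A i j < A i' j.
Proof. by case=> [[_ [_ lt_ij]] | [_ [/eqP]]]. Qed.

Lemma arrow_row_lt i j j' : arrow A B (i, j) (i, j') -> B i j < B i j'.
Proof. by case=> [[_ [/eqP]] | [_ [_ lt_ij]]]. Qed.

Lemma pure_nash_eq i j : (forall k, A k j <= A i j) -> (forall l, B i l <= B i j) ->
  nash_eq A B 'e_i (delta_mx j 0).
Proof.
move=> A_max B_max; split; split.
- exact: delta_row_in_SigmaA.
- move=> p' [p'_ge0 p'_sum1]; rewrite payoff_delta payoff_delta_col mxE.
  exact: (convex_comb_le p'_ge0 p'_sum1 A_max).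
- exact: delta_col_in_SigmaB.
- move=> q' [q'_ge0 q'_sum1]; rewrite payoff_delta payoff_delta_row mxE.
  under eq_bigr do rewrite mulrC.
  exact: (convex_comb_le q'_ge0 q'_sum1 B_max).
Qed.

Lemma sink_nash_eq i j : is_sink A B (i, j) -> nash_eq A B 'e_i (delta_mx j 0).
Proof.
move=> [sink_col sink_row]; apply: pure_nash_eq => [k | l].
  by have [-> // | /sink_col/arrow_col_lt/ltW] := eqVneq k i.
by have [-> // | /sink_row/arrow_row_lt/ltW] := eqVneq l j.
Qed.

Lemma no_sink_of_interior_unique_nash_eq p q :
  (forall p' q', nash_eq A B p' q' -> p' = p /\ q' = q) -> (forall k, 0 < p 0 k) ->
  forall c, ~ is_sink A B c.
Proof.
move=> nash_uniq p_gt0 [i j] /sink_nash_eq /nash_uniq [p_pure _].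
have := p_gt0 (lift i ord0).
by rewrite -p_pure mxE eq_sym (negbTE (neq_lift _ _)) andbF ltxx.
Qed.

End TransitionDiagram.

Section ZeroSum.
Variables (R : realType) (A B : 'M[R]_3) (e g : R) (f h : 'I_3 -> R).
Hypotheses (e_gt0 : 0 < e) (g_gt0 : 0 < g).
Hypothesis zero_sumAB : forall i j, (e * A i j + f j) + (g * B i j + h i) = 0.
Implicit Types (p : 'rV[R]_3) (q : 'cV[R]_3).

Definition potential : 'M[R]_3 := \matrix_(i, j) (e * A i j + f j).
Local Notation phi := potential.

Lemma potentialE_B i j : phi i j = - (g * B i j + h i).
Proof. by rewrite mxE; apply/eqP; rewrite -addr_eq0 zero_sumAB. Qed.

Lemma potential_lt_A i i' j : A i j < A i' j -> phi i j < phi i' j.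
Proof. by rewrite !mxE ltrD2r ltr_pM2l. Qed.

Lemma potential_gt_B i j j' : B i j < B i j' -> phi i j' < phi i j.
Proof. by rewrite !potentialE_B ltrN2 ltrD2r ltr_pM2l. Qed.

Lemma potential_lt_step (a b : cell) : (a.1 != b.1) (+) (a.2 != b.2) ->
  (a.1 != b.1 -> arrow A B a b) -> (a.2 != b.2 -> arrow A B b a) ->
  phi a.1 a.2 < phi b.1 b.2.
Proof.
case: a b => [i j] [i' j'] /=.
have [<- | i_neq] := eqVneq i i' => /=.
  by move=> j_neq _ col_step; apply/potential_gt_B/arrow_row_lt/col_step.
by move=> /negPn/eqP <- row_step _; apply/potential_lt_A/arrow_col_lt/row_step.
Qed.

Lemma no_alternating_cycle n c : ~ alternating_cycle A B n c.
Proof.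
move=> [n_gt0 [cn_c0 [one_coord [steps | steps]]]].
  apply: (@no_increasing_cycle _ (fun k => phi (c k).1 (c k).2) n) => // [|k k_lt].
    by rewrite cn_c0.
  have [row_step col_step] := steps k k_lt.
  by apply: potential_lt_step => //; apply: one_coord.
apply: (@no_increasing_cycle _ (fun k => - phi (c k).1 (c k).2) n) => // [|k k_lt].
  by rewrite cn_c0.
have [row_step col_step] := steps k k_lt.
rewrite ltrN2; apply: potential_lt_step; rewrite eq_sym //.
by rewrite [(c k.+1).2 == _]eq_sym; apply: one_coord.
Qed.

Lemma mulmx_potential_col q k :
  (phi *m q) k 0 = e * (A *m q) k 0 + \sum_l f l * q l 0.
Proof.
rewrite !mxE big_distrr -big_split /=.
by apply: eq_bigr => l _; rewrite mxE mulrDl mulrA.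
Qed.

Lemma mulmx_potential_row p l :
  (p *m phi) 0 l = - (g * (p *m B) 0 l + \sum_k p 0 k * h k).
Proof.
rewrite !mxE big_distrr -big_split -sumrN /=.
by apply: eq_bigr => k _; rewrite potentialE_B; ring.
Qed.

Lemma interior_nash_potential p q : nash_eq A B p q ->
  (forall k, 0 < p 0 k) -> (forall l, 0 < q l 0) ->
  forall i j, (phi *m q) i 0 = (p *m phi) 0 j.
Proof.
move=> [p_best q_best] p_gt0 q_gt0 i j.
apply: (const_row_col_values_eq (M := phi) p_best.1 q_best.1) => [k | l].
  by rewrite !mulmx_potential_col !(in_BR_A_indifferent p_best p_gt0).
by rewrite !mulmx_potential_row !(in_BR_B_indifferent q_best q_gt0).
Qed.

Lemma no_source_of_interior_nash_eq p q : nash_eq A B p q ->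
  (forall k, 0 < p 0 k) -> (forall l, 0 < q l 0) -> forall c, ~ is_source A B c.
Proof.
move=> pq_nash p_gt0 q_gt0 [i j] [source_col source_row].
have [[[p_ge0 p_sum1] _] [[q_ge0 q_sum1] _]] := pq_nash.
have row_lt : (phi *m q) i 0 < phi i j.
  rewrite [(_ *m q) i 0]mxE; under eq_bigr do rewrite mulrC.
  apply: (convex_comb_lt q_ge0 q_sum1 (k0 := lift j ord0)) => [l | |].
  - by have [-> // | /source_row/arrow_row_lt/potential_gt_B/ltW] := eqVneq l j.
  - exact: q_gt0.
  - by apply/potential_gt_B/arrow_row_lt/source_row; rewrite eq_sym neq_lift.
have col_gt : phi i j < (p *m phi) 0 j.
  rewrite [(p *m _) 0 j]mxE -ltrN2 -sumrN; under eq_bigr do rewrite -mulrN.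
  apply: (convex_comb_lt p_ge0 p_sum1 (k0 := lift i ord0)) => [k | |].
  - rewrite lerN2.
    by have [-> // | /source_col/arrow_col_lt/potential_lt_A/ltW] := eqVneq k i.
  - exact: p_gt0.
  - by rewrite ltrN2; apply/potential_lt_A/arrow_col_lt/source_col; rewrite eq_sym neq_lift.
have := lt_trans row_lt col_gt.
by rewrite (interior_nash_potential pq_nash p_gt0 q_gt0 i j) ltxx.
Qed.

End ZeroSum.

Theorem mainTheorem3 (R : realType) (A B : 'M[R]_3) :
  zero_sum A B ->
  (forall i i' j, i != i' -> A i j != A i' j) ->
  (forall i j j', j != j' -> B i j != B i j') ->
  (exists (p : 'rV[R]_3) (q : 'cV[R]_3),
     nash_eq A B p q /\
     (forall p' q', nash_eq A B p' q' -> p' = p /\ q' = q) /\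
     (forall j, 0 < p 0 j) /\ (forall i, 0 < q i 0)) ->
  (forall (n : nat) (c : nat -> cell), ~ alternating_cycle A B n c) /\
  (forall c : cell, ~ is_sink A B c) /\
  (forall c : cell, ~ is_source A B c).
Proof.
move=> [e [g [f [h [e_gt0 [g_gt0 zero_sumAB]]]]]] _ _.
move=> [p [q [pq_nash [nash_uniq [p_gt0 q_gt0]]]]].
split; [|split] => [n c | c | c].
- exact: (no_alternating_cycle e_gt0 g_gt0 zero_sumAB).
- exact: (no_sink_of_interior_unique_nash_eq nash_uniq p_gt0).
- exact: (no_source_of_interior_nash_eq e_gt0 g_gt0 zero_sumAB pq_nash p_gt0 q_gt0).
Qed.
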